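(* For every integer $n\ge 1$, $$a_n\ge\max\{\tau(n),\tau(2n-1),\tau_o(n+1)\},$$ and more precisely $$a_n\ge \tau(n)+\tau(2n-1)+\tau_o(n+1)-3-\delta_{n\equiv 0 \bmod 2}-\delta_{n\equiv -1\bmod 3}.$$
   Context: For an integer $n\ge1$, $a_n$ denotes the number of integers $x$ with $0\le x\le n-1$ for which there exists a positive integer $h$ with $h\mid x$ and $(2x+1)\mid(2n-2h+1)$ (every positive integer divides $0$). $\tau(m)$ is the number of positive divisors of $m$, $\tau_o(m)$ is the number of odd positive divisors of $m$, and $\delta_P$ equals $1$ if the condition $P$ holds and $0$ otherwise. *)

From mathcomp Require Import all_boot all_order all_algebra.
Set Implicit Arguments. Unset Strict Implicit. Unset Printing Implicit Defensive.
Import Order.TTheory GRing.Theory Num.Theory.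

(* The search for h is bounded by x.+1: if x > 0 then h | x forces h <= x,
   and if x = 0 then h = 1 already works; so this is equivalent to the
   unbounded existential. *)
Definition good_x (n x : nat) : bool :=
  [exists h : 'I_(x.+2),
     [&& 0 < (h : nat), (h : nat) %| x &
      ((2 * x + 1)%N%:Z %| ((2 * n)%N%:Z - (2 * (h : nat))%N%:Z + 1)%R)%Z]].

Definition a_seq (n : nat) : nat := #|[set x : 'I_n | good_x n x]|.

Definition tau (m : nat) : nat := size (divisors m).
Definition tau_o (m : nat) : nat := size [seq d <- divisors m | odd d].

From mathcomp Require Import all_boot all_order all_algebra.
From mathcomp Require Import zify.

Set Implicit Arguments.
Unset Strict Implicit.
Unset Printing Implicit Defensive.

(* Three families of admissible x: x = n - d for d | n (take h = d, so that
   2n - 2h + 1 = 2x + 1); x = (e - 1)/2 for e | 2n - 1 (take h = 1); and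
   x = (d - 1)/2 for odd d | n + 1 (take h = x, as 2n - 2x + 1 = 2(n + 1) - d).
   They have tau(n), tau(2n - 1) and tau_o(n + 1) members, and they barely
   overlap: the first two share at most 0 and n - 1, and the third meets the
   others only in 0, in n/2 when n is even, and in 1 when 3 | n + 1.
   Inclusion-exclusion then gives the bound. *)

Lemma count_uniq_leq_size (T : eqType) (P : pred T) (s t : seq T) :
  uniq s -> {in s, forall x, P x -> x \in t} -> count P s <= size t.
Proof.
move=> s_uniq sPt; rewrite -size_filter uniq_leq_size ?filter_uniq // => x.
by rewrite mem_filter => /andP[Px sx]; apply: sPt.
Qed.

Lemma size_undup_cat (T : eqType) (s t : seq T) : uniq t ->
  size (undup (s ++ t)) + count (mem t) (undup s) = size (undup s) + size t.
Proof.
move=> t_uniq; rewrite undup_cat (undup_id t_uniq) size_cat size_filter.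
by rewrite -(count_predC (mem t) (undup s)) addnAC [count (mem t) _ + _]addnC.
Qed.

Lemma double_half_odd d : odd d -> 2 * d./2 + 1 = d.
Proof. by move=> d_odd; rewrite -[RHS]odd_double_half d_odd -mul2n addnC. Qed.

Lemma divisor_ge_half d n : 0 < n -> d %| n -> n <= 2 * d -> d = n \/ n = 2 * d.
Proof.
move=> n_gt0 /dvdnP[k n_eq]; subst n.
by move: n_gt0; case: k => [|[|[|k]]]; rewrite ?mulSn ?mul0n; lia.
Qed.

Lemma size_le_a_seq n (s : seq nat) :
  uniq s -> {in s, forall x, (x < n) && good_x n x} -> size s <= a_seq n.
Proof.
move=> s_uniq s_good; apply/card_geqP; exists (pmap insub s : seq 'I_n); split.
- exact: pmap_sub_uniq.
- rewrite size_pmap_sub -[RHS]count_predT; apply: eq_in_count => x /s_good.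
  by case/andP.
- by move=> x; rewrite mem_pmap_sub inE => /s_good /andP[].
Qed.

(* [h <= n] makes the truncated subtraction agree with the integer one. *)
Lemma good_x_intro n x h : 0 < h -> h %| x -> h <= n ->
  2 * x + 1 %| 2 * n - 2 * h + 1 -> good_x n x.
Proof.
move=> h_gt0 h_dvd h_le x_dvd; apply/existsP.
have [->|x_neq0] := eqVneq x 0.
  by exists (Ordinal (isT : 1 < 2)); rewrite /= dvd1z.
have h_lt : h < x.+2 by rewrite ltnS ltnW // ltnS dvdn_leq ?lt0n.
exists (Ordinal h_lt); rewrite /= h_gt0 h_dvd /=.
suff -> : ((2 * n)%:Z - (2 * h)%:Z + 1 = (2 * n - 2 * h + 1)%:Z)%R by [].
lia.
Qed.

Lemma good_x0 n : good_x n 0.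
Proof. by apply/existsP; exists (Ordinal (isT : 1 < 2)); rewrite /= dvd1z. Qed.

Definition compl_divisors n := [seq n - d | d <- divisors n].

Definition half_odd_divisors m := [seq d./2 | d <- divisors m & odd d].

Lemma mem_compl_divisors n x : 0 < n ->
  (x \in compl_divisors n) = (x < n) && (n - x %| n).
Proof.
move=> n_gt0; apply/mapP/andP => [[d]|[x_lt x_dvd]].
  rewrite -dvdn_divisors // => d_dvd ->.
  have d_gt0 := dvdn_gt0 n_gt0 d_dvd; have d_le := dvdn_leq n_gt0 d_dvd.
  by rewrite subKn // ltn_subrL d_gt0 n_gt0.
by exists (n - x); rewrite ?subKn ?(ltnW x_lt) // -dvdn_divisors.
Qed.

Lemma mem_half_odd_divisors m x : 0 < m ->
  (x \in half_odd_divisors m) = (2 * x + 1 %| m).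
Proof.
move=> m_gt0; apply/mapP/idP => [[d]|x_dvd].
  by rewrite mem_filter -dvdn_divisors // => /andP[d_odd d_dvd] ->;
    rewrite double_half_odd.
have odd_x : odd (2 * x + 1) by rewrite addn1 /= mul2n odd_double.
exists (2 * x + 1); first by rewrite mem_filter -dvdn_divisors // odd_x x_dvd.
by rewrite addn1 mul2n /= uphalf_double.
Qed.

Lemma compl_divisors_uniq n : 0 < n -> uniq (compl_divisors n).
Proof.
move=> n_gt0; rewrite map_inj_in_uniq ?divisors_uniq // => d1 d2.
by rewrite -!dvdn_divisors // => /(dvdn_leq n_gt0) ? /(dvdn_leq n_gt0) ?; lia.
Qed.

Lemma half_odd_divisors_uniq m : uniq (half_odd_divisors m).
Proof.
rewrite map_inj_in_uniq ?filter_uniq ?divisors_uniq // => d1 d2.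
rewrite !mem_filter => /andP[d1_odd _] /andP[d2_odd _] eq_half.
by rewrite -(double_half_odd d1_odd) -(double_half_odd d2_odd) eq_half.
Qed.

Lemma size_compl_divisors n : size (compl_divisors n) = tau n.
Proof. exact: size_map. Qed.

Lemma size_half_odd_divisors m : size (half_odd_divisors m) = tau_o m.
Proof. exact: size_map. Qed.

Lemma tau_o_odd m : odd m -> tau_o m = tau m.
Proof.
move=> m_odd; congr size; apply/all_filterP/allP => d.
by rewrite -dvdn_divisors ?odd_gt0 // => /dvdn_odd; apply.
Qed.

Lemma odd_double_pred n : 0 < n -> odd (2 * n - 1).
Proof. by move=> n_gt0; rewrite oddB ?oddM // muln_gt0. Qed.

Definition admissible_families n :=
  compl_divisors n ++ half_odd_divisors (2 * n - 1) ++ half_odd_divisors n.+1.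

Section AdmissibleFamilies.

Variable n : nat.
Hypothesis n_gt0 : 0 < n.

Lemma compl_divisor_good x : x < n -> n - x %| n -> good_x n x.
Proof.
move=> x_lt dvd; apply: (@good_x_intro _ _ (n - x)); rewrite ?subn_gt0 ?leq_subr //.
  by rewrite -{2}(subKn (ltnW x_lt)) dvdn_sub.
by have -> : 2 * n - 2 * (n - x) + 1 = 2 * x + 1 by lia.
Qed.

Lemma half_divisor_double_pred_good x :
  2 * x + 1 %| 2 * n - 1 -> (x < n) && good_x n x.
Proof.
move=> dvd; have le := dvdn_leq _ dvd; apply/andP; split; first lia.
apply: (@good_x_intro _ _ 1) => //.
by have -> : 2 * n - 2 * 1 + 1 = 2 * n - 1 by lia.
Qed.

Lemma half_divisor_succ_good x : 2 * x + 1 %| n.+1 -> (x < n) && good_x n x.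
Proof.
move=> dvd; have le := dvdn_leq (ltn0Sn n) dvd; apply/andP; split; first lia.
have [->|x_neq0] := eqVneq x 0; first exact: good_x0.
apply: (@good_x_intro _ _ x); rewrite ?lt0n //; first lia.
have -> : 2 * n - 2 * x + 1 = n.+1 * 2 - (2 * x + 1) by lia.
by rewrite dvdn_sub ?dvdn_mulr.
Qed.

Lemma admissible_families_good x :
  x \in admissible_families n -> (x < n) && good_x n x.
Proof.
rewrite !mem_cat mem_compl_divisors // !mem_half_odd_divisors //; last by lia.
case/or3P => [/andP[x_lt dvd]|dvd|dvd].
- by rewrite x_lt compl_divisor_good.
- exact: half_divisor_double_pred_good.
- exact: half_divisor_succ_good.
Qed.

Lemma admissible_size_le_a_seq s :
  uniq s -> {subset s <= admissible_families n} -> size s <= a_seq n.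
Proof.
move=> s_uniq s_sub; apply: size_le_a_seq => // x /s_sub.
exact: admissible_families_good.
Qed.

Lemma compl_half_double_pred_overlap x : x < n -> n - x %| n ->
  2 * x + 1 %| 2 * n - 1 -> x \in [:: 0; n.-1].
Proof.
move=> x_lt dvd hdvd; rewrite !inE; apply/orP.
have [d1|d_neq1] := eqVneq (n - x) 1; first by right; apply/eqP; lia.
have : 2 * x + 1 %| 2 * n - 1 - (2 * x + 1) by rewrite dvdn_sub.
move=> /dvdn_leq le; have {}le : 2 * x + 1 <= 2 * n - 1 - (2 * x + 1).
  by apply: le; lia.
have n_le : n <= 2 * (n - x) by lia.
by left; case: (divisor_ge_half n_gt0 dvd n_le) => eq_n; apply/eqP; lia.
Qed.

Lemma compl_half_succ_overlap x : x < n -> n - x %| n -> 2 * x + 1 %| n.+1 ->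
  x = 0 \/ ~~ odd n /\ x = n./2.
Proof.
move=> x_lt dvd hdvd.
have : 2 * x + 1 %| n.+1 * 2 - (2 * x + 1) by rewrite dvdn_sub ?dvdn_mulr.
move=> /dvdn_leq le; have {}le : 2 * x + 1 <= n.+1 * 2 - (2 * x + 1).
  by apply: le; lia.
have n_le : n <= 2 * (n - x) by lia.
case: (divisor_ge_half n_gt0 dvd n_le) => eq_n; first by left; lia.
have x_eq : x = n - x by lia.
by right; rewrite eq_n -x_eq mul2n odd_double doubleK.
Qed.

Lemma half_double_pred_succ_overlap x :
  2 * x + 1 %| 2 * n - 1 -> 2 * x + 1 %| n.+1 -> x <= 1.
Proof.
move=> dvd_pred dvd_succ.
have : 2 * x + 1 %| n.+1 * 2 - (2 * n - 1) by rewrite dvdn_sub ?dvdn_mulr.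
rewrite (_ : n.+1 * 2 - (2 * n - 1) = 3); last by lia.
by move/dvdn_leq => /(_ isT); lia.
Qed.

Lemma count_compl_in_half_double_pred :
  count (mem (half_odd_divisors (2 * n - 1))) (compl_divisors n) <= 2.
Proof.
apply: (@count_uniq_leq_size _ _ _ [:: 0; n.-1]); first exact: compl_divisors_uniq.
move=> x /=; rewrite mem_compl_divisors // mem_half_odd_divisors; last by lia.
by case/andP; apply: compl_half_double_pred_overlap.
Qed.

Lemma count_half_succ_in_others :
  count (mem (half_odd_divisors n.+1))
    (undup (compl_divisors n ++ half_odd_divisors (2 * n - 1)))
  <= 1 + ~~ odd n + (3 %| n.+1).
Proof.
pose exceptions := 0 :: nseq (~~ odd n) n./2 ++ nseq (3 %| n.+1) 1.
have -> : 1 + ~~ odd n + (3 %| n.+1) = size exceptions.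
  by rewrite /= size_cat !size_nseq.
apply: count_uniq_leq_size; first exact: undup_uniq.
move=> x /=; rewrite mem_undup mem_cat mem_compl_divisors //.
rewrite !mem_half_odd_divisors //; last by lia.
rewrite inE mem_cat !mem_nseq => /orP[/andP[x_lt dvd]|dvd_pred] dvd_succ.
  have [->|[-> ->]] := compl_half_succ_overlap x_lt dvd dvd_succ.
    by rewrite eqxx.
  by rewrite eqxx orbT.
have := half_double_pred_succ_overlap dvd_pred dvd_succ.
case: x {dvd_pred} dvd_succ => [|[|//]] dvd3 _; first by rewrite eqxx.
by rewrite (dvd3 : 3 %| n.+1) orbT.
Qed.

Lemma size_undup_admissible_families :
  tau n + tau (2 * n - 1) + tau_o n.+1
  <= size (undup (admissible_families n)) + 2 + (1 + ~~ odd n + (3 %| n.+1)).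
Proof.
have size_AB := size_undup_cat (compl_divisors n)
                  (half_odd_divisors_uniq (2 * n - 1)).
have size_ABC := size_undup_cat (compl_divisors n ++ half_odd_divisors (2 * n - 1))
                   (half_odd_divisors_uniq n.+1).
rewrite (undup_id (compl_divisors_uniq n_gt0)) size_compl_divisors in size_AB.
rewrite size_half_odd_divisors tau_o_odd ?odd_double_pred // in size_AB.
rewrite size_half_odd_divisors in size_ABC.
rewrite -size_AB addnAC -size_ABC /admissible_families catA -!addnA leq_add2l addnC.
exact: leq_add count_compl_in_half_double_pred count_half_succ_in_others.
Qed.

End AdmissibleFamilies.

Local Open Scope ring_scope.

Theorem theorem10 (n : nat) : (1 <= n)%N ->
  (maxn (tau n) (maxn (tau (2 * n - 1)) (tau_o n.+1)) <= a_seq n)%N /\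
  ((tau n)%:Z + (tau (2 * n - 1))%:Z + (tau_o n.+1)%:Z - 3
     - (~~ odd n)%:Z - (n.+1 %% 3 == 0)%N%:Z <= (a_seq n)%:Z).
Proof.
move=> n_gt0; have size_le_a := admissible_size_le_a_seq n_gt0.
split.
  rewrite !geq_max -size_compl_divisors -(tau_o_odd (odd_double_pred n_gt0)).
  by rewrite -!size_half_odd_divisors !size_le_a ?compl_divisors_uniq
    ?half_odd_divisors_uniq // => x; rewrite !mem_cat => ->; rewrite ?orbT.
have bound : (tau n + tau (2 * n - 1) + tau_o n.+1
               <= a_seq n + 2 + (1 + ~~ odd n + (3 %| n.+1)))%N.
  apply: leq_trans (size_undup_admissible_families n_gt0) _.
  by rewrite !leq_add2r size_le_a ?undup_uniq // => x; rewrite mem_undup.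
by move: bound; rewrite /dvdn; case: (odd n); case: (n.+1 %% 3 == 0)%N => /=; lia.
Qed.
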